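(* Let $A_0,\ldots,A_m\in\mathbb{R}^{n\times n}$, $\tau_0=0$, $\tau_1,\ldots,\tau_m>0$, weights $w_0,\ldots,w_m\in(0,\infty]$ with at least one finite ($1/\infty:=0$), $\epsilon>0$, and $\sigma\in\mathbb{R}$. Put $w(\sigma)=\sum_{i=0}^m e^{-\sigma\tau_i}/w_i$, $A_{\sigma,0}=A_0-\sigma I_n$, $A_{\sigma,i}=A_ie^{-\tau_i\sigma}$ ($1\le i\le m$), and for $\xi>0$ let $$H(\lambda,\sigma,\xi)=\lambda I_{2n}-\begin{pmatrix}A_{\sigma,0}&\xi^{-2}I_n\\-I_n&-A_{\sigma,0}^*\end{pmatrix}-\sum_{i=1}^m\left(\begin{pmatrix}A_{\sigma,i}&0\\0&0\end{pmatrix}e^{-\lambda\tau_i}+\begin{pmatrix}0&0\\0&-A_{\sigma,i}^*\end{pmatrix}e^{\lambda\tau_i}\right).$$ Define $h_\sigma(\lambda)=\det H\big(\lambda,\sigma,\frac{1}{\epsilon w(\sigma)}\big)$. Then for every $\omega\ge 0$, $\Im\, h_\sigma(j\omega)=0$ and $\Re\, h_\sigma'(j\omega)=0$.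
   Context: $h_\sigma'$ denotes the derivative of the entire function $\lambda\mapsto h_\sigma(\lambda)$. *)

From mathcomp Require Import all_boot all_order all_algebra.
From mathcomp Require Import all_classical all_reals all_analysis.
From mathcomp Require Export complex.
Import Order.TTheory GRing.Theory Num.Theory.
Import numFieldNormedType.Exports.

Set Implicit Arguments.
Unset Strict Implicit.
Unset Printing Implicit Defensive.

Local Open Scope ring_scope.
Local Open Scope complex_scope.

Definition Cx (R : realType) : numFieldType := (R[i] : numFieldType).

Definition cexp (R : realType) (z : R[i]) : R[i] :=
  (expR (complex.Re z))%:C * (cos (complex.Im z) +i* sin (complex.Im z)).

Definition winv (R : realType) (w : \bar R) : R :=
  if w is r%:E then r^-1 else 0.

Definition wsig (R : realType) (m : nat) (tau : 'I_m.+1 -> R)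
  (w : 'I_m.+1 -> \bar R) (sigma : R) : R :=
  \sum_(i < m.+1) expR (- sigma * tau i) * winv (w i).

Definition Asig0 (R : realType) (n m : nat) (A : 'I_m.+1 -> 'M[R]_n)
  (sigma : R) : 'M[R]_n := A ord0 - sigma%:M.
Definition Asig (R : realType) (n m : nat) (A : 'I_m.+1 -> 'M[R]_n)
  (tau : 'I_m.+1 -> R) (sigma : R) (i : 'I_m.+1) : 'M[R]_n :=
  expR (- tau i * sigma) *: A i.

Definition toCmx (R : realType) (p q : nat) (M : 'M[R]_(p, q)) : 'M[R[i]]_(p, q) :=
  map_mx (fun x => x%:C) M.

(* H(lambda, sigma, xi); for real matrices A^* = A^T *)
Definition Hmat (R : realType) (n m : nat) (A : 'I_m.+1 -> 'M[R]_n)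
  (tau : 'I_m.+1 -> R) (lam : R[i]) (sigma xi : R) : 'M[R[i]]_(n + n) :=
  lam%:M
  - block_mx (toCmx (Asig0 A sigma)) ((xi ^- 2)%:C)%:M
             (- 1%:M) (- (toCmx (Asig0 A sigma))^T)
  - \sum_(i < m.+1 | i != ord0)
      (cexp (- lam * (tau i)%:C) *: block_mx (toCmx (Asig A tau sigma i)) 0 0 0
       + cexp (lam * (tau i)%:C) *: block_mx 0 0 0 (- (toCmx (Asig A tau sigma i))^T)).

Definition hsig (R : realType) (n m : nat) (A : 'I_m.+1 -> 'M[R]_n)
  (tau : 'I_m.+1 -> R) (w : 'I_m.+1 -> \bar R) (eps sigma : R)
  (lam : Cx R) : Cx R :=
  \det (Hmat A tau lam sigma (1 / (eps * wsig tau w sigma))).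

From mathcomp Require Import all_boot all_order all_algebra.
From mathcomp Require Import all_classical all_reals all_analysis.
From mathcomp Require Import complex.
Import Order.TTheory GRing.Theory Num.Theory.
Import numFieldNormedType.Exports.
Local Open Scope ring_scope.
Local Open Scope complex_scope.
Local Open Scope classical_set_scope.

(* With J = [[0, I], [-I, 0]] one has J H(lam) J = H(-lam)^T, and since the
   A_i are real the entrywise conjugate of H(lam) is H(conj lam); as
   (det J)^2 = 1, this gives h(-conj lam) = conj (h lam).  On the
   imaginary axis lam = -conj lam, so h(j omega) is real, and the reflection
   t |-> -conj t carries each difference quotient of h at j omega to minus
   the conjugate of another one, so the derivative h'(j omega) is purely
   imaginary. *)

Section ImaginaryAxisReflection.
Variable R : realType.

Definition imrefl (z : R[i]) : R[i] := - conjc z.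

Lemma imreflK : involutive imrefl.
Proof. by move=> z; rewrite /imrefl raddfN /= opprK conjcK. Qed.

Lemma imreflD (x y : R[i]) : imrefl (x + y) = imrefl x + imrefl y.
Proof. by rewrite /imrefl rmorphD opprD. Qed.

Lemma imrefl0 : imrefl 0 = 0.
Proof. by rewrite /imrefl conjc0 oppr0. Qed.

Lemma imrefl_fixed (z : R[i]) : (imrefl z == z) = (complex.Re z == 0).
Proof. by case: z => a b; rewrite /imrefl eq_complex /= opprK eqxx andbT eqNr. Qed.

Lemma norm_imreflB (x y : R[i]) : `|imrefl x - imrefl y| = `|x - y|.
Proof. by rewrite /imrefl -opprD -raddfB normrN; apply: normcJ. Qed.

Lemma continuous_imrefl : continuous (imrefl : Cx R -> Cx R).
Proof.
move=> x; apply/(@cvgrPdist_lt _ (Cx R) _ (nbhs x)) => e e0; near=> y.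
rewrite norm_imreflB; near: y; exact: (@cvgr_dist_lt _ (Cx R) _ (nbhs x) _ id).
Unshelve. all: by end_near. Qed.

Lemma imrefl_dnbhs (x : Cx R) : imrefl @ x^' --> (imrefl x : Cx R)^'.
Proof.
apply: (@continuous_injective_withinNx (Cx R) (Cx R)).
  exact: continuous_imrefl.
by move=> y yx; apply: (can_inj imreflK yx).
Qed.

(* If the limit does not exist, [lim] returns the default point 0, which is
   fixed by the reflection as well. *)
Lemma imrefl_lim (g : Cx R -> Cx R) (x : Cx R) :
  imrefl x = x -> (forall t, g (imrefl t) = imrefl (g t)) ->
  imrefl (lim (g @ x^')) = lim (g @ x^').
Proof.
move=> xE gE; have [gx|/dvgP->] := pselect (cvg (g @ x^')); last exact: imrefl0.
set l := lim (g @ x^') in gx *.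
have x_proper : ProperFilter (x^' : set_system (Cx R)).
  exact: Proper_dnbhs_numFieldType.
have gxl : (imrefl \o g \o imrefl) @ x^' --> (imrefl l : Cx R).
  apply: (@continuous_cvg _ (Cx R) (Cx R) _ _ (g \o imrefl) imrefl l).
    exact: continuous_imrefl.
  by apply: cvg_comp (imrefl_dnbhs x) _; rewrite xE.
have gK : imrefl \o g \o imrefl = g by apply/funext => t /=; rewrite gE imreflK.
rewrite gK in gxl.
exact/esym/(@cvg_lim _ (@norm_hausdorff _ (Cx R)) _ _ x_proper _ _ gxl).
Qed.

End ImaginaryAxisReflection.

Arguments imrefl {R}.

Section ImaginaryAxisSymmetry.
Variables (R : realType) (f : Cx R -> Cx R) (a : Cx R).
Hypothesis f_imrefl : forall z, f (imrefl z) = conjc (f z).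
Hypothesis Re_a : complex.Re a = 0.

Let a_fixed : imrefl a = a.
Proof. by apply/eqP; rewrite imrefl_fixed Re_a. Qed.

Let fa_real : conjc (f a) = f a.
Proof. by rewrite -f_imrefl a_fixed. Qed.

Lemma imrefl_sym_Im_eq0 : complex.Im (f a) = 0.
Proof.
move: fa_real; case: (f a) => x y /eqP.
by rewrite eq_complex /= eqxx eqNr => /eqP.
Qed.

Lemma imrefl_sym_Re_derive1_eq0 : complex.Re (f^`() a) = 0.
Proof.
apply/eqP; rewrite -imrefl_fixed; apply/eqP/imrefl_lim; first exact: imrefl0.
have scaleE (x y : Cx R) : x *: y = x * y by [].
move=> t; rewrite !scaleE -{1}a_fixed -imreflD f_imrefl -{1}fa_real.
by rewrite /imrefl -raddfB invrN -conjc_inv mulNr -rmorphM.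
Qed.

End ImaginaryAxisSymmetry.

Section Symplectic.
Variables (C : comNzRingType) (n : nat).

Definition symplmx : 'M[C]_(n + n) := block_mx 0 1%:M (- 1%:M) 0.

Lemma mulmx_symplmx_block (a b c d : 'M[C]_n) :
  symplmx *m block_mx a b c d *m symplmx = block_mx (- d) c b (- a).
Proof.
rewrite /symplmx !mulmx_block.
by rewrite !(mulmx0, mul0mx, mulmx1, mul1mx, mulmxN, mulNmx, addr0, add0r, opprK).
Qed.

Lemma mulmx_symplmx_scalar (c : C) : symplmx *m c%:M *m symplmx = (- c)%:M.
Proof.
rewrite [c%:M]scalar_mx_block [(- c)%:M]scalar_mx_block mulmx_symplmx_block.
by rewrite raddfN.
Qed.

Lemma det_symplmx_sqr : \det symplmx * \det symplmx = 1.
Proof.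
rewrite -det_mulmx -{1}[symplmx]mulmx1 mulmx_symplmx_scalar det_scalar.
by rewrite -signr_odd addnn odd_double.
Qed.

End Symplectic.

Arguments symplmx {C n}.

Lemma cexpJ (R : realType) (z : R[i]) : conjc (cexp z) = cexp (conjc z).
Proof.
case: z => a b; rewrite /cexp /= cosN sinN.
by apply/eqP; rewrite eq_complex /= !mul0r !subr0 !addr0 mulrN !eqxx.
Qed.

Lemma map_toCmx_conjc (R : realType) p q (M : 'M[R]_(p, q)) :
  map_mx conjc (toCmx M) = toCmx M.
Proof. by apply/matrixP => i j; rewrite !mxE /= oppr0. Qed.

Section HamiltonianMatrix.
Variables (R : realType) (n m : nat) (A : 'I_m.+1 -> 'M[R]_n).
Variables (tau : 'I_m.+1 -> R) (sigma xi : R).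

Local Notation H lam := (Hmat A tau lam sigma xi).

Lemma map_Hmat_conjc (lam : R[i]) : map_mx conjc (H lam) = H (conjc lam).
Proof.
rewrite /Hmat !map_mxB map_scalar_mx /= map_block_mx map_mx_sum.
congr (_ - _ - _).
  by rewrite !map_mxN -map_trmx map_toCmx_conjc map_scalar_mx map_mx1 /= oppr0.
apply: eq_bigr => i _.
rewrite map_mxD !map_mxZ !map_block_mx !map_mx0 map_mxN -map_trmx !map_toCmx_conjc.
by congr (_ *: _ + _ *: _);
  rewrite -[LHS]/(conjc (cexp _)) cexpJ rmorphM ?rmorphN;
  congr (cexp (_ * _)); exact: conjc_real.
Qed.

Lemma symplmx_Hmat (lam : R[i]) : symplmx *m H lam *m symplmx = (H (- lam))^T.
Proof.
rewrite /Hmat !mulmxBr !mulmxBl [RHS]linearB [in RHS]linearB /=.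
congr (_ - _ - _).
- by rewrite mulmx_symplmx_scalar tr_scalar_mx.
- by rewrite mulmx_symplmx_block tr_block_mx !linearN /= trmxK !tr_scalar_mx opprK.
rewrite mulmx_sumr mulmx_suml linear_sum; apply: eq_bigr => i _ /=.
rewrite mulmxDr mulmxDl -!scalemxAr -!scalemxAl !mulmx_symplmx_block.
by rewrite linearD !linearZ /= !tr_block_mx !trmx0 [(- _)^T]linearN /= trmxK
  !oppr0 !opprK addrC.
Qed.

(* Rewrite in [LHS] only: matching [H lam] against [H (- lam)] unfolds [Hmat]
   completely before failing. *)
Lemma det_HmatN (lam : R[i]) : \det (H (- lam)) = \det (H lam).
Proof.
rewrite -[LHS]det_tr -symplmx_Hmat !det_mulmx.
by rewrite mulrAC det_symplmx_sqr mul1r.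
Qed.

Lemma det_Hmat_imrefl (lam : R[i]) :
  \det (H (imrefl lam)) = conjc (\det (H lam)).
Proof.
rewrite /imrefl [LHS]det_HmatN -map_Hmat_conjc.
exact: (det_map_mx (conjc : {rmorphism R[i] -> R[i]})).
Qed.

End HamiltonianMatrix.

Lemma hsig_imrefl (R : realType) (n m : nat) (A : 'I_m.+1 -> 'M[R]_n)
    (tau : 'I_m.+1 -> R) (w : 'I_m.+1 -> \bar R) (eps sigma : R) (lam : R[i]) :
  hsig A tau w eps sigma (imrefl lam) = conjc (hsig A tau w eps sigma lam).
Proof. exact: det_Hmat_imrefl. Qed.

(* The reflection symmetry of h_sigma holds for all parameters. *)
Theorem proposition2 (R : realType) (n m : nat) (A : 'I_m.+1 -> 'M[R]_n)
  (tau : 'I_m.+1 -> R) (w : 'I_m.+1 -> \bar R) (eps sigma : R) :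
  tau ord0 = 0 ->
  (forall i : 'I_m.+1, i != ord0 -> 0 < tau i) ->
  (forall i : 'I_m.+1, (0 < w i)%E) ->
  (exists i : 'I_m.+1, w i \is a fin_num) ->
  0 < eps ->
  forall omega : R, 0 <= omega ->
    complex.Im (hsig A tau w eps sigma (0 +i* omega)) = 0 /\
    complex.Re (derive1 (hsig A tau w eps sigma) (0 +i* omega)) = 0.
Proof.
move=> _ _ _ _ _ omega _.
split; [apply: imrefl_sym_Im_eq0 | apply: imrefl_sym_Re_derive1_eq0] => //;
  exact: hsig_imrefl.
Qed.
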